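(* Let $G=(V,E)$ be a bridged graph that contains an induced cycle of length greater than three, let $C$ be a shortest such induced cycle, of length $k$, and suppose $x\notin C$ is such that $C\cup\{x\}$ induces a uniquely centered wheel. For $v\in V\setminus (C\cup\{x\})$, let $A(v)$ denote the set of neighbours of $v$ in $C$. If $A(v)\ne\emptyset$, then (a) $A(v)$ induces a path with at most three vertices (i.e. consists of at most three consecutive vertices of $C$); and (b) if $v$ is not adjacent to $x$, then $A(v)$ induces a path with at most two vertices.
   Context: $G$ is bridged if it contains no isometric cycle (a cycle whose distances equal distances in $G$) of length greater than three. $C\cup\{x\}$ induces a wheel means $C$ is an induced cycle and $x$ is adjacent to all vertices of $C$; it is uniquely centered if there is no vertex $y\ne x$ such that $y$ is adjacent to all vertices of $C$ (i.e. $C\cup\{y\}$ is also an induced wheel). *)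

(* Cycles are given as a length k and a map
   c : nat -> T, whose vertices are c 0, ..., c (k-1) in cyclic order. *)
From mathcomp Require Import all_boot.
Set Implicit Arguments. Unset Strict Implicit. Unset Printing Implicit Defensive.

Definition simple_graph (T : Type) (adj : T -> T -> Prop) : Prop :=
  (forall u v, adj u v -> adj v u) /\ (forall u, ~ adj u u).

Inductive walk (T : Type) (adj : T -> T -> Prop) : T -> T -> nat -> Prop :=
  | walk0 u : walk adj u u 0
  | walkS u w v n : adj u w -> walk adj w v n -> walk adj u v n.+1.

Definition dist_is (T : Type) (adj : T -> T -> Prop) (u v : T) (n : nat) : Prop :=
  walk adj u v n /\ forall m, m < n -> ~ walk adj u v m.

Definition is_cycle (T : Type) (adj : T -> T -> Prop) (k : nat) (c : nat -> T) : Prop :=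
  [/\ 3 <= k,
      (forall i j, i < k -> j < k -> c i = c j -> i = j) &
      (forall i, i < k -> adj (c i) (c (i.+1 %% k)))].

Definition induced_cycle (T : Type) (adj : T -> T -> Prop) (k : nat) (c : nat -> T) : Prop :=
  is_cycle adj k c /\
  (forall i j, i < k -> j < k -> adj (c i) (c j) ->
     j = i.+1 %% k \/ i = j.+1 %% k).

Definition cyc_dist (k i j : nat) : nat :=
  let d := if i <= j then j - i else i - j in minn d (k - d).

Definition isometric_cycle (T : Type) (adj : T -> T -> Prop) (k : nat) (c : nat -> T) : Prop :=
  is_cycle adj k c /\
  (forall i j, i < k -> j < k -> dist_is adj (c i) (c j) (cyc_dist k i j)).

Definition bridged (T : Type) (adj : T -> T -> Prop) : Prop :=
  forall k c, isometric_cycle adj k c -> k <= 3.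

Definition wheel (T : Type) (adj : T -> T -> Prop) (k : nat) (c : nat -> T) (x : T) : Prop :=
  induced_cycle adj k c /\ forall i, i < k -> adj x (c i).

Definition uniquely_centered_wheel (T : Type) (adj : T -> T -> Prop)
    (k : nat) (c : nat -> T) (x : T) : Prop :=
  wheel adj k c x /\ forall y, y <> x -> ~ wheel adj k c y.

Definition nbrs_consecutive (T : Type) (adj : T -> T -> Prop)
    (k : nat) (c : nat -> T) (v : T) (m : nat) : Prop :=
  exists2 i, i < k &
    forall j, j < k -> (adj v (c j) <-> exists2 t, t < m & j = (i + t) %% k).

From mathcomp Require Import all_boot zify.
From Stdlib Require Import Classical.
Set Implicit Arguments. Unset Strict Implicit.

(* - Bridged graphs have no induced 4-cycle, since an induced 4-cycle is
     isometric; hence k >= 5.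
   - v is not a second center, so it misses some vertex of C.
   - If v is adjacent to c a and c (a+d) but to no vertex strictly between,
     then c a, ..., c (a+d), v is an induced cycle of length d + 2; by
     minimality of k such "gaps" never have 2 <= d <= k - 3.
   - A purely combinatorial lemma on k-periodic predicates then shows that
     the neighbours of v on C form one run of at most 3 consecutive vertices
     (part (a)).
   - If the run has 3 vertices c i, c (i+1), c (i+2) and v is not adjacent to
     x, then v, c i, x, c (i+2) is an induced 4-cycle, which is impossible;
     so the run has at most 2 vertices (part (b)). *)

Lemma least_witness (Q : nat -> Prop) n :
  Q n -> exists m, Q m /\ forall j, j < m -> ~ Q j.
Proof.
elim: n {-2}n (leqnn n) => [|N IH] n le_nN Qn.
  by exists n; split => // j; lia.
case: (classic (exists2 j, j < n & Q j)) => [[j lt_jn Qj]|noQ].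
  by apply: (IH j) => //; lia.
by exists n; split => // j lt_jn Qj; apply: noQ; exists j.
Qed.

Lemma addn_mod_inj a k t s :
  t < k -> s < k -> (a + t) %% k = (a + s) %% k -> t = s.
Proof. by move=> lt_tk lt_sk /eqP; rewrite eqn_modDl !modn_small // => /eqP. Qed.

Definition no_short_gap (k : nat) (R : nat -> Prop) : Prop :=
  forall b d, 2 <= d -> d + 3 <= k -> R b -> R (b + d) ->
    (forall s, 0 < s -> s < d -> ~ R (b + s)) -> False.

Section PeriodicRun.

Variables (k : nat) (R : nat -> Prop).
Hypothesis k_gt4 : 4 < k.
Hypothesis R_periodic : forall s, R (s + k) <-> R s.
Hypothesis R0 : ~ R 0.
Hypothesis R_no_gap : no_short_gap k R.

Lemma R_at_k : ~ R k.
Proof. by rewrite -[k]add0n R_periodic. Qed.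

Section Run.

Variables f e : nat.
Hypothesis Rf : R f.
Hypothesis before_f : forall s, s < f -> ~ R s.
Hypothesis R_run : forall t, t < e -> R (f + t).
Hypothesis run_end : ~ R (f + e).

Lemma run_pos : 0 < e.
Proof. by rewrite lt0n; apply/eqP => e0; apply: run_end; rewrite e0 addn0. Qed.

Lemma run_start_pos : 0 < f.
Proof. by rewrite lt0n; apply/eqP => f0; apply: R0; rewrite -f0. Qed.

Lemma run_start_lt : f < k.
Proof.
case: (ltnP f k) => // le_kf; exfalso.
apply: (before_f (s := f - k)); first lia.
by rewrite -R_periodic subnK.
Qed.

Lemma run_fits : f + e <= k.
Proof.
case: (leqP (f + e) k) => // lt_k_fe; exfalso.
have lt_fk := run_start_lt.
by apply: R_at_k; rewrite -(subnKC (ltnW lt_fk)); apply: R_run; lia.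
Qed.

(* Nothing after the run, up to k: otherwise the next position of R after
   the run would end a short gap (or, when f = e = 1, the position k - 1
   would start one of length 2 across k). *)
Lemma after_run s : f + e <= s -> s < k -> ~ R s.
Proof.
move=> le_fe_s lt_sk Rs.
have Rs' : R (f + e + (s - (f + e))) by rewrite subnKC.
have [u [Ru u_first]] := @least_witness (fun t => R (f + e + t)) _ Rs'.
have u_pos : 0 < u.
  by rewrite lt0n; apply/eqP => u0; apply: run_end; rewrite -[f + e]addn0 -u0.
have le_u : u <= s - (f + e).
  by case: (leqP u (s - (f + e))) => // /u_first.
have f_pos := run_start_pos; have e_pos := run_pos.
have R_last : R (f + e - 1) by rewrite (_ : f + e - 1 = f + (e - 1)); [apply: R_run | ]; lia.
case: (leqP (u + 4) k) => [short|long].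
- apply: (R_no_gap (b := f + e - 1) (d := u + 1)) => //; try lia.
  + by rewrite (_ : f + e - 1 + (u + 1) = f + e + u) //; lia.
  + move=> t t_pos lt_tu.
    rewrite (_ : f + e - 1 + t = f + e + (t - 1)); last lia.
    by apply: u_first; lia.
- (* the only remaining configuration: f = e = 1 and R (k - 1), a gap of 2 *)
  apply: (R_no_gap (b := k - 1) (d := 2)); try lia.
  + by rewrite (_ : k - 1 = f + e + u) //; lia.
  + by rewrite (_ : k - 1 + 2 = f + k) ?R_periodic //; lia.
  + move=> t t_pos lt_t2; rewrite (_ : k - 1 + t = k); [exact: R_at_k | lia].
Qed.

(* The gap from the end of the run around to f + k is short unless e <= 3. *)
Lemma run_le3 : e <= 3.
Proof.
have f_pos := run_start_pos; have le_fe_k := run_fits; have e_pos := run_pos.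
case: (leqP e 3) => // ge4; exfalso.
apply: (R_no_gap (b := f + e - 1) (d := k - e + 1)); try lia.
- by rewrite (_ : f + e - 1 = f + (e - 1)); [apply: R_run | ]; lia.
- by rewrite (_ : f + e - 1 + (k - e + 1) = f + k) ?R_periodic //; lia.
- move=> t t_pos lt_t.
  case: (ltnP (f + e - 1 + t) k) => [lt_k|ge_k]; first by apply: after_run; lia.
  rewrite (_ : f + e - 1 + t = (f + e - 1 + t - k) + k) ?R_periodic; last lia.
  by apply: before_f; lia.
Qed.

Lemma run_exact s : s < k -> (R s <-> f <= s < f + e).
Proof.
move=> lt_sk; split => [Rs | le_s_lt].
- case: (ltnP s f) => [/before_f // | le_fs].
  case: (ltnP s (f + e)) => [lt_s | /after_run /(_ lt_sk) //]; lia.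
- by rewrite -(@subnKC f s); [apply: R_run | ]; lia.
Qed.

End Run.

Lemma periodic_run : (exists s, R s) ->
  exists f e, [/\ 0 < e, e <= 3, f + e <= k &
                forall s, s < k -> (R s <-> f <= s < f + e)].
Proof.
case=> s Rs; have [f [Rf before_f]] := least_witness Rs.
have lt_fk := run_start_lt Rf before_f.
have not_R_fk : ~ R (f + (k - f)) by rewrite subnKC; [exact: R_at_k | exact: ltnW].
have [e [run_end run]] := @least_witness (fun t => ~ R (f + t)) _ not_R_fk.
have R_run : forall t, t < e -> R (f + t) by move=> t /run /NNPP.
exists f, e; split.
- exact: run_pos Rf run_end.
- exact: run_le3 Rf before_f R_run run_end.
- exact: run_fits Rf before_f R_run.
- exact: run_exact Rf before_f R_run run_end.
Qed.

End PeriodicRun.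

Lemma cyclic_run k (P : nat -> Prop) j0 :
  4 < k -> j0 < k -> ~ P j0 -> (exists2 i, i < k & P i) ->
  no_short_gap k (fun a => P (a %% k)) ->
  exists m, [/\ 1 <= m, m <= 3 &
    exists2 i, i < k & forall j, j < k -> (P j <-> exists2 t, t < m & j = (i + t) %% k)].
Proof.
move=> k_gt4 lt_j0k Pj0 [i lt_ik Pi] P_no_gap.
(* read P cyclically, starting from the non-position j0 *)
pose R s := P ((j0 + s) %% k).
have R_periodic : forall s, R (s + k) <-> R s by move=> s; rewrite /R addnA modnDr.
have R0 : ~ R 0 by rewrite /R addn0 modn_small.
have R_no_gap : no_short_gap k R.
  move=> b d le2d ledk Rb Rbd between; apply: (P_no_gap (j0 + b) d) => //.
  - by rewrite -addnA.
  - by move=> s s_pos lt_sd; rewrite -addnA; apply: between.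
have [s Rs] : exists s, R s.
  exists (i + k - j0); rewrite /R (_ : j0 + (i + k - j0) = i + k); last lia.
  by rewrite modnDr modn_small.
have [f [e [e_pos le_e3 le_fe_k R_exact]]] :=
  periodic_run k_gt4 R_periodic R0 R_no_gap (ex_intro _ s Rs).
exists e; split => //; exists ((j0 + f) %% k); first by rewrite ltn_mod; lia.
move=> j lt_jk.
have shift_t : forall t, ((j0 + f) %% k + t) %% k = (j0 + (f + t)) %% k.
  by move=> t; rewrite modnDml addnA.
have j_shift : j = (j0 + (j + k - j0) %% k) %% k.
  by rewrite modnDmr (_ : j0 + (j + k - j0) = j + k) ?modnDr ?modn_small //; lia.
split => [Pj | [t lt_te ->]]; last by rewrite shift_t -/(R (f + t)) R_exact; lia.
move: Pj; rewrite j_shift -/(R _) R_exact ?ltn_mod; last lia.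
by move=> fe; exists ((j + k - j0) %% k - f); [lia | rewrite shift_t subnKC; lia].
Qed.

Section SmallCycles.

Variables (T : Type) (adj : T -> T -> Prop).
Hypothesis adj_simple : simple_graph adj.

Lemma walk_nil u w : walk adj u w 0 -> u = w.
Proof. by move=> W; inversion W. Qed.

Lemma walk_edge u w : walk adj u w 1 -> adj u w.
Proof. by move=> W; inversion_clear W as [|x y z n xy yz]; rewrite -(walk_nil yz). Qed.

Lemma dist_refl u : dist_is adj u u 0.
Proof. by split; [constructor | case]. Qed.

Lemma dist_edge u w : u <> w -> adj u w -> dist_is adj u w 1.
Proof.
move=> ne_uw uw; split; first exact: walkS uw (walk0 _ _).
by case=> // _ /walk_nil.
Qed.

Lemma dist_two u w z : u <> z -> ~ adj u z -> adj u w -> adj w z -> dist_is adj u z 2.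
Proof.
move=> ne_uz nadj_uz uw wz; split; first exact: walkS uw (walkS wz (walk0 _ _)).
by case=> [_ /walk_nil | [_ /walk_edge | //]].
Qed.

(* In a 4-cycle every pair of vertices is at cycle distance at most 2, and
   an induced one realizes these distances in the graph. *)
Lemma induced_C4_isometric c : induced_cycle adj 4 c -> isometric_cycle adj 4 c.
Proof.
case: adj_simple => adj_sym _ [[_ c_inj c_adj] c_chordless].
have ne i j : i < 4 -> j < 4 -> i <> j -> c i <> c j by move=> ? ? ne /c_inj; auto.
have edge i : i < 4 -> adj (c i) (c (i.+1 %% 4)) /\ adj (c (i.+1 %% 4)) (c i).
  by move=> lt_i; split; [| apply: adj_sym]; apply: c_adj.
have diag i : i < 4 -> ~ adj (c i) (c (i.+2 %% 4)).
  move=> lt_i /(c_chordless _ _ lt_i (ltn_mod _ _)).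
  by case: i lt_i => [|[|[|[|]]]] // _ [].
move: (edge 0 isT) (edge 1 isT) (edge 2 isT) (edge 3 isT) => [e01 e10] [e12 e21] [e23 e32] [e30 e03].
move: (diag 0 isT) (diag 1 isT) (diag 2 isT) (diag 3 isT) => n02 n13 n20 n31.
split; first by split.
move=> [|[|[|[|i]]]] [|[|[|[|j]]]] //= _ _;
  first [ exact: dist_refl
        | apply: dist_edge; [by apply: ne | assumption]
        | apply: dist_two; [by apply: ne | assumption | eassumption | eassumption]].
Qed.

Lemma bridged_no_induced_C4 c : bridged adj -> ~ induced_cycle adj 4 c.
Proof. by move=> adj_bridged /induced_C4_isometric /adj_bridged. Qed.

Definition square (w0 w1 w2 w3 : T) (t : nat) : T :=
  match t with 0 => w0 | 1 => w1 | 2 => w2 | _ => w3 end.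

(* Adjacent vertices are distinct, so only the two diagonals need checking. *)
Lemma square_induced w0 w1 w2 w3 :
  adj w0 w1 -> adj w1 w2 -> adj w2 w3 -> adj w3 w0 ->
  ~ adj w0 w2 -> ~ adj w1 w3 -> w0 <> w2 -> w1 <> w3 ->
  induced_cycle adj 4 (square w0 w1 w2 w3).
Proof.
case: adj_simple => adj_sym adj_irr e01 e12 e23 e30 n02 n13 ne02 ne13.
have ne u w : adj u w -> u <> w by move=> uw eq_uw; apply: (adj_irr u); rewrite {2}eq_uw.
move: (ne _ _ e01) (ne _ _ e12) (ne _ _ e23) (ne _ _ e30) => ne01 ne12 ne23 ne30.
split; first split => //.
- by move=> [|[|[|[|i]]]] [|[|[|[|j]]]] //= _ _ E; congruence.
- by move=> [|[|[|[|i]]]].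
- move=> [|[|[|[|i]]]] [|[|[|[|j]]]] //= _ _; try by [left | right].
  all: move=> E; exfalso; move: E;
    by [move/adj_irr | move/n02 | move/n13 | move/adj_sym/n02 | move/adj_sym/n13].
Qed.

End SmallCycles.

Section Detour.

Variables (T : Type) (adj : T -> T -> Prop).
Hypothesis adj_simple : simple_graph adj.
Variables (k : nat) (c : nat -> T) (v : T) (a d : nat).
Hypothesis c_induced : induced_cycle adj k c.
Hypothesis v_off_cycle : forall i, i < k -> v <> c i.
Hypotheses (d_pos : 0 < d) (d_short : d + 2 <= k).
Hypothesis v_first : adj v (c (a %% k)).
Hypothesis v_last : adj v (c ((a + d) %% k)).
Hypothesis v_between : forall s, 0 < s -> s < d -> ~ adj v (c ((a + s) %% k)).

(* the arc c a, c (a+1), ..., c (a+d), closed up through v *)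
Definition detour (t : nat) : T := if t <= d then c ((a + t) %% k) else v.

Let arc_lt t : (a + t) %% k < k. Proof. by rewrite ltn_mod; lia. Qed.
Let arc_succ t : ((a + t) %% k).+1 %% k = (a + t.+1) %% k.
Proof. by rewrite -addn1 modnDml addn1 addnS. Qed.

Lemma detour_injective i j : i < d + 2 -> j < d + 2 -> detour i = detour j -> i = j.
Proof.
case: adj_simple c_induced => _ _ [[_ c_inj _] _] lt_i lt_j.
rewrite /detour; case: (leqP i d) => le_id; case: (leqP j d) => le_jd; try lia.
- by move/(c_inj _ _ (arc_lt _) (arc_lt _))/addn_mod_inj; apply; lia.
- by move=> E; case: (v_off_cycle (arc_lt i)).
- by move=> E; case: (v_off_cycle (arc_lt j)).
Qed.

Lemma detour_edge i : i < d + 2 -> adj (detour i) (detour (i.+1 %% (d + 2))).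
Proof.
case: adj_simple c_induced => adj_sym _ [[_ _ c_adj] _] lt_i.
rewrite /detour; case: (ltnP i d) => [lt_id | le_di].
- rewrite (modn_small (_ : i.+1 < d + 2)); last lia.
  rewrite (ltnW lt_id) lt_id -arc_succ; exact: c_adj.
case: (i =P d) => [-> | ne_id].
- rewrite (modn_small (_ : d.+1 < d + 2)); last lia.
  by rewrite leqnn ltnn; apply: adj_sym.
have -> : i = d + 1 by lia.
rewrite (_ : (d + 1).+1 = d + 2) ?modnn; last lia.
by rewrite ifF ?addn0 //; lia.
Qed.

Lemma detour_chordless i j : i < d + 2 -> j < d + 2 -> adj (detour i) (detour j) ->
  j = i.+1 %% (d + 2) \/ i = j.+1 %% (d + 2).
Proof.
case: adj_simple c_induced => adj_sym adj_irr [_ c_chordless] lt_i lt_j.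
rewrite /detour; case: (leqP i d) => le_id; case: (leqP j d) => le_jd.
- move/(c_chordless _ _ (arc_lt _) (arc_lt _)); rewrite !arc_succ.
  case=> E; [left | right].
  + rewrite modn_small; last lia.
    by apply: (addn_mod_inj (a := a) (k := k)) => //; lia.
  + rewrite modn_small; last lia.
    by apply: (addn_mod_inj (a := a) (k := k)) => //; lia.
- move/adj_sym => v_adj; have j_v : j = d + 1 by lia.
  rewrite j_v (_ : (d + 1).+1 = d + 2); last lia.
  rewrite modnn.
  case: (i =P 0) => [-> | ne_i0]; first by right.
  case: (i =P d) => [-> | ne_id]; first by left; rewrite modn_small; lia.
  by exfalso; apply: (v_between (s := i)) => //; lia.
- move=> v_adj; have i_v : i = d + 1 by lia.
  rewrite i_v (_ : (d + 1).+1 = d + 2); last lia.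
  rewrite modnn.
  case: (j =P 0) => [-> | ne_j0]; first by left.
  case: (j =P d) => [-> | ne_jd]; first by right; rewrite modn_small; lia.
  by exfalso; apply: (v_between (s := j)) => //; lia.
- have -> : i = j by lia.
  by move/adj_irr.
Qed.

Lemma detour_induced : induced_cycle adj (d + 2) detour.
Proof.
split; last exact: detour_chordless.
by split; [lia | exact: detour_injective | exact: detour_edge].
Qed.

End Detour.

(* In a graph whose shortest induced cycles of length > 3 have length k, a
   vertex off such a cycle C has no short gap among its neighbours on C:
   otherwise it would close a shorter induced cycle. *)
Lemma minimal_cycle_no_short_gap T (adj : T -> T -> Prop) k c v :
  simple_graph adj -> induced_cycle adj k c ->
  (forall k' c', induced_cycle adj k' c' -> 3 < k' -> k <= k') ->
  (forall i, i < k -> v <> c i) ->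
  no_short_gap k (fun a => adj v (c (a %% k))).
Proof.
move=> adj_simple c_induced c_min v_off a d le2d le_dk v_first v_last v_between.
have := c_min _ _ (detour_induced adj_simple c_induced v_off _ _ v_first v_last v_between).
lia.
Qed.

Lemma noncenter_misses_cycle T (adj : T -> T -> Prop) k c x v :
  uniquely_centered_wheel adj k c x -> v <> x -> exists2 j, j < k & ~ adj v (c j).
Proof.
move=> [[c_induced _] x_unique] ne_vx; apply: NNPP => v_full.
apply: (x_unique v ne_vx); split => // j lt_jk.
by apply: NNPP => nadj; apply: v_full; exists j.
Qed.

Lemma common_neighbours_square T (adj : T -> T -> Prop) k c v x i :
  simple_graph adj -> induced_cycle adj k c -> 3 < k -> i < k ->
  adj v (c i) -> adj v (c ((i + 2) %% k)) -> adj x (c i) -> adj x (c ((i + 2) %% k)) ->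
  ~ adj v x -> v <> x -> induced_cycle adj 4 (square v (c i) x (c ((i + 2) %% k))).
Proof.
move=> adj_simple [[_ c_inj _] c_chordless] k_gt3 lt_ik vi vi2 xi xi2 nadj_vx ne_vx.
case: (adj_simple) => adj_sym _.
have lt_i2 : (i + 2) %% k < k by rewrite ltn_mod; lia.
apply: square_induced => //; try exact: adj_sym.
- have succ2 : ((i + 2) %% k).+1 %% k = (i + 3) %% k.
    by rewrite -[_.+1]addn1 modnDml -addnA.
  move/(c_chordless _ _ lt_ik lt_i2) => [E | E].
  + by have := @addn_mod_inj i k 2 1; rewrite addn1 E; lia.
  + by have := @addn_mod_inj i k 0 3; rewrite addn0 (modn_small lt_ik) -succ2 -E; lia.
- move/(c_inj _ _ lt_ik lt_i2) => E.
  by have := @addn_mod_inj i k 0 2; rewrite addn0 (modn_small lt_ik) -E; lia.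
Qed.

Theorem mainTheorem14 (T : Type) (adj : T -> T -> Prop) (k : nat) (c : nat -> T) (x v : T) :
  simple_graph adj ->
  bridged adj ->
  induced_cycle adj k c -> 3 < k ->
  (forall k' c', induced_cycle adj k' c' -> 3 < k' -> k <= k') ->
  (forall i, i < k -> c i <> x) ->
  uniquely_centered_wheel adj k c x ->
  (forall i, i < k -> v <> c i) -> v <> x ->
  (exists2 i, i < k & adj v (c i)) ->
  (exists m, [/\ 1 <= m, m <= 3 & nbrs_consecutive adj k c v m]) /\
  (~ adj v x -> exists m, [/\ 1 <= m, m <= 2 & nbrs_consecutive adj k c v m]).
Proof.
move=> adj_simple adj_bridged c_induced k_gt3 c_min _ x_wheel v_off ne_vx v_touches.
have k_gt4 : 4 < k.
  case: (k =P 4) => [k4 | ]; last lia.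
  by case: (bridged_no_induced_C4 adj_simple adj_bridged (c := c)); rewrite -k4.
have [j0 lt_j0 v_misses] := noncenter_misses_cycle x_wheel ne_vx.
have [m [m_pos m_le3 [i lt_ik v_run]]] := cyclic_run k_gt4 lt_j0 v_misses v_touches
  (minimal_cycle_no_short_gap adj_simple c_induced c_min v_off).
split; first by exists m; split => //; exists i.
move=> nadj_vx; exists m; split => //; last by exists i.
case: (leqP m 2) => // m_gt2; exfalso.
have v_at t : t < m -> adj v (c ((i + t) %% k)).
  by move=> lt_tm; apply/v_run; [rewrite ltn_mod; lia | exists t].
have x_at j : j < k -> adj x (c j) by case: x_wheel => [[_ x_center] _]; apply: x_center.
apply: (bridged_no_induced_C4 adj_simple adj_bridged).
apply: (common_neighbours_square (v := v) (x := x) (i := i) adj_simple c_induced) => //.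
- by have := v_at 0 m_pos; rewrite addn0 modn_small.
- exact: v_at.
- exact: x_at.
- by apply: x_at; rewrite ltn_mod; lia.
Qed.
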